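(* Let $D$ be a diagram of a link $L$, fix $a^*\in A(D)$, and let $M_0$ be the $\Lambda$-submodule of $M_A^{red}(L)$ generated by the elements $(\gamma_D(a)-\gamma_D(a^* ))\otimes1$, $a\in A(D)$. Then there is a $\Lambda$-linear epimorphism $e_D:M_0\to Dis(MQ(L))$ with $e_D((\gamma_D(a)-\gamma_D(a^* ))\otimes1)=d_a=\beta_a\beta_{a^*}^{-1}$ for all $a\in A(D)$, where $Dis(MQ(L))$ carries the $\Lambda$-module structure $m\cdot d=d^m$, $t^n\cdot d=\beta_{a^*}^nd\beta_{a^*}^{-n}$ ($m,n\in\mathbb Z$), written additively.
   Context: Let $L=K_1\cup\dots\cup K_\mu$ be an oriented classical link with diagram $D$. $A(D)$ is the set of arcs of $D$ and $C(D)$ the set of crossings; $\kappa_D:A(D)\to\{1,\dots,\mu\}$ sends an arc to the index of its component. At a crossing $c$, $a_1$ is the overpassing arc, $a_2$ the underpassing arc on the right of $a_1$ (with respect to the orientation of $a_1$), $a_3$ the underpassing arc on the left of $a_1$. $\Lambda_\mu=\mathbb Z[t_1^{\pm1},\dots,t_\mu^{\pm1}]$, $\Lambda=\mathbb Z[t^{\pm1}]$, $\tau:\Lambda_\mu\to\Lambda$ the ring homomorphism with $\tau(t_i)=t$, making $\Lambda$ a $\Lambda_\mu$-module. $\rho_D:\Lambda_\mu^{C(D)}\to\Lambda_\mu^{A(D)}$ is the $\Lambda_\mu$-linear map with $\rho_D(c)=(1-t_{\kappa_D(a_2)})a_1+t_{\kappa_D(a_1)}a_2-a_3$; $M_A(L)=\operatorname{coker}\rho_D$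 with quotient map $\gamma_D$; $M_A^{red}(L)=M_A(L)\otimes_{\Lambda_\mu}\Lambda$. A quandle is a set $Q$ with a binary operation $\triangleright$ such that $x\triangleright x=x$, each translation $\beta_y(x)=x\triangleright y$ is a bijection, and $(x\triangleright y)\triangleright z=(x\triangleright z)\triangleright(y\triangleright z)$; it is medial if $(w\triangleright x)\triangleright(y\triangleright z)=(w\triangleright y)\triangleright(x\triangleright z)$. The displacement group $Dis(Q)$ is the subgroup of the automorphism group of $Q$ generated by all $\beta_y\beta_z^{-1}$ (abelian for medial $Q$). $MQ(L)$ is the medial quandle generated by $A(D)$ subject to $a_2\triangleright a_1=a_3$ at every crossing. *)

(* All objects are given by the universal properties that
   define them in the paper (presentations / extension of scalars), so that no
   (multivariate) Laurent polynomial ring is needed. *)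
From HB Require Import structures.
From mathcomp Require Import all_boot all_algebra.
Set Implicit Arguments. Unset Strict Implicit. Unset Printing Implicit Defensive.
Import GRing.Theory.
Local Open Scope ring_scope.

(* arcs A(D), crossings C(D), kappa_D, and at each crossing c:
   over c = a_1 (overpassing arc), under_r c = a_2 (underpassing arc on the
   right of a_1), under_l c = a_3 (underpassing arc on the left of a_1). *)
Record diagram (mu : nat) := Diagram {
  d_arc : finType;
  d_crossing : finType;
  kappa : d_arc -> 'I_mu;
  over : d_crossing -> d_arc;
  under_r : d_crossing -> d_arc;
  under_l : d_crossing -> d_arc }.

Definition additive_map (V W : zmodType) (f : V -> W) : Prop :=
  forall x y, f (x + y) = f x + f y.

(* A Lambda = Z[t^{+-1}]-module is an abelian group with an automorphism t. *)
Definition is_Lmod (V : zmodType) (t : V -> V) : Prop :=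
  additive_map t /\ bijective t.

(* A Lambda_mu = Z[t_1^{+-1},...,t_mu^{+-1}]-module is an abelian group with
   mu pairwise commuting automorphisms. *)
Definition is_Lmu_mod (mu : nat) (V : zmodType) (ts : 'I_mu -> V -> V) : Prop :=
  (forall i, is_Lmod (ts i)) /\ (forall i j x, ts i (ts j x) = ts j (ts i x)).

Definition rel_MA (mu : nat) (D : diagram mu) (V : zmodType)
    (ts : 'I_mu -> V -> V) (g : d_arc D -> V) : Prop :=
  forall c : d_crossing D,
    g (over c) - ts (kappa (under_r c)) (g (over c))
    + ts (kappa (over c)) (g (under_r c)) - g (under_l c) = 0.

(* (M, ts, gamma) is M_A(L) = coker rho_D with quotient map gamma_D:
   the Lambda_mu-module presented by generators A(D) and relations rho_D(c). *)
Definition is_MA (mu : nat) (D : diagram mu) (M : zmodType)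
    (ts : 'I_mu -> M -> M) (gamma : d_arc D -> M) : Prop :=
  is_Lmu_mod ts /\ rel_MA ts gamma /\
  forall (W : zmodType) (ws : 'I_mu -> W -> W) (g : d_arc D -> W),
    is_Lmu_mod ws -> rel_MA ws g ->
    exists f : M -> W,
      [/\ additive_map f, (forall i x, f (ts i x) = ws i (f x)),
          (forall a, f (gamma a) = g a) &
          (forall f' : M -> W, additive_map f' ->
             (forall i x, f' (ts i x) = ws i (f' x)) ->
             (forall a, f' (gamma a) = g a) -> f' =1 f)].

(* (N, t, phi) is M (x)_{Lambda_mu} Lambda, Lambda a Lambda_mu-module via
   tau (t_i |-> t), with phi x = x (x) 1: universal property of extension
   of scalars along tau. *)
Definition is_base_change (mu : nat) (M : zmodType) (ts : 'I_mu -> M -> M)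
    (N : zmodType) (t : N -> N) (phi : M -> N) : Prop :=
  [/\ is_Lmod t, additive_map phi, (forall i x, phi (ts i x) = t (phi x)) &
  forall (W : zmodType) (tw : W -> W) (psi : M -> W),
    is_Lmod tw -> additive_map psi -> (forall i x, psi (ts i x) = tw (psi x)) ->
    exists f : N -> W,
      [/\ additive_map f, (forall x, f (t x) = tw (f x)),
          (forall x, f (phi x) = psi x) &
          (forall f' : N -> W, additive_map f' ->
             (forall x, f' (t x) = tw (f' x)) ->
             (forall x, f' (phi x) = psi x) -> f' =1 f)]].

Definition submod_gen (N : zmodType) (t : N -> N) (S : N -> Prop) (x : N) : Prop :=
  forall P : N -> Prop,
    (forall y, S y -> P y) -> P 0 ->
    (forall y z, P y -> P z -> P (y - z)) ->
    (forall y, P y -> P (t y)) ->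
    (forall y, P (t y) -> P y) ->
    P x.

Section Quandles.
Variables (Q : Type) (op : Q -> Q -> Q).

Definition beta (y : Q) : Q -> Q := fun x => op x y.

Definition is_quandle : Prop :=
  [/\ (forall x, op x x = x), (forall y, bijective (beta y)) &
      (forall x y z, op (op x y) z = op (op x z) (op y z))].

Definition is_medial : Prop :=
  forall w x y z, op (op w x) (op y z) = op (op w y) (op x z).

(* Dis(Q): the subgroup of Aut(Q) generated by all beta_y beta_z^{-1}
   (functions compared extensionally). *)
Definition Dis (f : Q -> Q) : Prop :=
  forall P : (Q -> Q) -> Prop,
    (forall y z g, cancel (beta z) g -> cancel g (beta z) -> P (beta y \o g)) ->
    P id ->
    (forall f1 f2, P f1 -> P f2 -> P (f1 \o f2)) ->
    (forall f1 g, P f1 -> cancel f1 g -> cancel g f1 -> P g) ->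
    (forall f1 f2, f1 =1 f2 -> P f1 -> P f2) ->
    P f.
End Quandles.

Definition quandle_hom (Q Q' : Type) (op : Q -> Q -> Q) (op' : Q' -> Q' -> Q')
    (h : Q -> Q') : Prop :=
  forall x y, h (op x y) = op' (h x) (h y).

Definition rel_MQ (mu : nat) (D : diagram mu) (Q : Type) (op : Q -> Q -> Q)
    (j : d_arc D -> Q) : Prop :=
  forall c : d_crossing D, op (j (under_r c)) (j (over c)) = j (under_l c).

(* (Q, op, iota) is MQ(L): the medial quandle generated by A(D) subject to
   a_2 |> a_1 = a_3 at every d_crossing (universal property of the presentation). *)
Definition is_MQ (mu : nat) (D : diagram mu) (Q : Type) (op : Q -> Q -> Q)
    (iota : d_arc D -> Q) : Prop :=
  [/\ is_quandle op, is_medial op, rel_MQ op iota &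
  forall (Q' : Type) (op' : Q' -> Q' -> Q') (j : d_arc D -> Q'),
    is_quandle op' -> is_medial op' -> rel_MQ op' j ->
    exists h : Q -> Q',
      [/\ quandle_hom op op' h, (forall a, h (iota a) = j a) &
          (forall h' : Q -> Q', quandle_hom op op' h' ->
             (forall a, h' (iota a) = j a) -> h' =1 h)]].

From HB Require Import structures.
From mathcomp Require Import all_boot all_algebra.
From mathcomp Require Import boolp.
Import GRing.Theory.
Local Open Scope ring_scope.

Set Implicit Arguments. Unset Strict Implicit. Unset Printing Implicit Defensive.

(* Fix the base point s = iota astar and put d_y = beta_y beta_s^-1.  Mediality
   makes Dis(MQ(L)) abelian, and conjugation by beta_s, which is a quandle
   automorphism, makes it a Lambda-module.  Right distributivity gives
   d_(x |> y) = d_y + t d_x - t d_y, so at a crossing the relation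
   a_2 |> a_1 = a_3 becomes exactly rho_D(c) with every t_i acting as t: the
   universal properties of M_A(L) and of the extension of scalars tau then give
   a Lambda-linear map M_A^red(L) -> Dis(MQ(L)) sending (gamma a - gamma astar) (x) 1
   to d_a.  The same identity shows that the d_q, q in MQ(L), lie in the
   submodule spanned by the d_a (MQ(L) is generated by the arcs), and the d_q
   generate Dis, whence surjectivity on M0. *)

Lemma cancel_inv_eq (T : Type) (f g1 g2 : T -> T) :
  cancel f g1 -> cancel g2 f -> g1 =1 g2.
Proof. by move=> fK g2K x; rewrite -{1}(g2K x) fK. Qed.

Lemma can_conj (T : Type) (h hi f g : T -> T) :
  cancel h hi -> cancel hi h -> cancel f g -> cancel (h \o f \o hi) (h \o g \o hi).
Proof. by move=> hK hiK fK x /=; rewrite hK fK hiK. Qed.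

Section AdditiveMap.
Variables (V W : zmodType) (f : V -> W).
Hypothesis f_add : additive_map f.

Lemma additive_map0 : f 0 = 0.
Proof. by apply: (@addrI _ (f 0)); rewrite -f_add !addr0. Qed.

Lemma additive_mapN x : f (- x) = - f x.
Proof. by apply: (@addrI _ (f x)); rewrite -f_add !subrr additive_map0. Qed.

Lemma additive_mapB x y : f (x - y) = f x - f y.
Proof. by rewrite f_add additive_mapN. Qed.

End AdditiveMap.

Section SubmoduleGenerated.
Variables (N : zmodType) (t : N -> N).
Implicit Types (S : N -> Prop) (x y : N).

Lemma submod_gen_gen S x : S x -> submod_gen t S x.
Proof. by move=> Sx P PS _ _ _ _; apply: PS. Qed.

Lemma submod_gen0 S : submod_gen t S 0.
Proof. by move=> P _ P0. Qed.

Lemma submod_genB S x y :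
  submod_gen t S x -> submod_gen t S y -> submod_gen t S (x - y).
Proof. by move=> Sx Sy P PS P0 PB Pt PtV; apply: (PB); [apply: Sx | apply: Sy]. Qed.

Lemma submod_genN S x : submod_gen t S x -> submod_gen t S (- x).
Proof. by move=> Sx; have := submod_genB (@submod_gen0 S) Sx; rewrite sub0r. Qed.

Lemma submod_genD S x y :
  submod_gen t S x -> submod_gen t S y -> submod_gen t S (x + y).
Proof. by move=> Sx /submod_genN Sy; have := submod_genB Sx Sy; rewrite opprK. Qed.

Lemma submod_gen_t S x : submod_gen t S x -> submod_gen t S (t x).
Proof. by move=> Sx P PS P0 PB Pt PtV; apply: (Pt); apply: Sx. Qed.

Lemma submod_gen_tV S x : submod_gen t S (t x) -> submod_gen t S x.
Proof. by move=> Stx P PS P0 PB Pt PtV; apply: (PtV); apply: Stx. Qed.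

End SubmoduleGenerated.

Lemma submod_gen_map (N W : zmodType) (t : N -> N) (tw : W -> W) (F : N -> W)
    (S : N -> Prop) (T : W -> Prop) :
  bijective t -> injective tw -> additive_map F -> (forall x, F (t x) = tw (F x)) ->
  (forall w, T w -> exists2 x, S x & F x = w) ->
  forall w, submod_gen tw T w -> exists2 x, submod_gen t S x & F x = w.
Proof.
move=> [ti tK tiK] tw_inj F_add F_t TS w Tw.
apply: (Tw (fun w => exists2 x, submod_gen t S x & F x = w)).
- by move=> _ /TS [x Sx <-]; exists x => //; apply: submod_gen_gen.
- by exists 0; [apply: submod_gen0 | apply: additive_map0].
- move=> _ _ [x Sx <-] [y Sy <-].
  by exists (x - y); [apply: submod_genB | apply: additive_mapB].
- by move=> _ [x Sx <-]; exists (t x); [apply: submod_gen_t | apply: F_t].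
- move=> w' [x Sx Fx]; exists (ti x).
    by apply: submod_gen_tV; rewrite tiK.
  by apply: tw_inj; rewrite -F_t tiK.
Qed.

Section Displacements.
Variables (Q : Type) (op : Q -> Q -> Q).
Local Notation beta := (beta op).
Local Notation Dis := (Dis op).

Lemma Dis_gen y z g : cancel (beta z) g -> cancel g (beta z) -> Dis (beta y \o g).
Proof. by move=> zK gK P Pgen _ _ _ _; apply: Pgen zK gK. Qed.

Lemma Dis_id : Dis id.
Proof. by move=> P _ Pid. Qed.

Lemma Dis_comp f1 f2 : Dis f1 -> Dis f2 -> Dis (f1 \o f2).
Proof.
by move=> D1 D2 P Pgen Pid Pcomp Pinv Peq; apply: (Pcomp); [apply: D1 | apply: D2].
Qed.

Lemma Dis_inv f g : Dis f -> cancel f g -> cancel g f -> Dis g.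
Proof.
by move=> Df fK gK P Pgen Pid Pcomp Pinv Peq; apply: (Pinv _ _ _ fK gK); apply: Df.
Qed.

Lemma Dis_eq f1 f2 : f1 =1 f2 -> Dis f1 -> Dis f2.
Proof. by move=> f12 D1 P Pgen Pid Pcomp Pinv Peq; apply: (Peq _ _ f12); apply: D1. Qed.

Lemma Dis_commute_ind c :
    (forall y z g q, cancel (beta z) g -> cancel g (beta z) ->
       c (beta y (g q)) = beta y (g (c q))) ->
  forall f q, Dis f -> c (f q) = f (c q).
Proof.
move=> cgen f + Df; apply: (Df (fun f => forall q, c (f q) = f (c q))).
- by move=> y z g zK gK q; apply: cgen zK gK.
- by [].
- by move=> f1 f2 c1 c2 q /=; rewrite c1 c2.
- by move=> f1 g c1 f1K gK q; rewrite -[LHS]f1K -c1 gK.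
- by move=> f1 f2 f12 c1 q; rewrite -!f12.
Qed.

End Displacements.

Arguments Dis_id {Q op}.

Section QuandleFacts.
Variables (Q : Type) (op : Q -> Q -> Q).
Hypothesis opQ : is_quandle op.
Local Notation beta := (beta op).

Lemma beta_bij y : exists g, cancel (beta y) g /\ cancel g (beta y).
Proof. by case: opQ => _ /(_ y) [g yK gK] _; exists g. Qed.

Definition binv y : Q -> Q := sval (cid (beta_bij y)).

Lemma binvK y : cancel (beta y) (binv y).
Proof. by case: (svalP (cid (beta_bij y))). Qed.

Lemma binvKV y : cancel (binv y) (beta y).
Proof. by case: (svalP (cid (beta_bij y))). Qed.

Lemma beta_hom y : quandle_hom op op (beta y).
Proof. by case: opQ => _ _ selfdistr x z; apply: selfdistr. Qed.

Lemma quandle_hom_can h hi :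
  cancel h hi -> cancel hi h -> quandle_hom op op h -> quandle_hom op op hi.
Proof. by move=> hK hiK hh x y; apply: (can_inj hK); rewrite hh !hiK. Qed.

Lemma binv_hom y : quandle_hom op op (binv y).
Proof. exact: quandle_hom_can (binvK y) (binvKV y) (beta_hom y). Qed.

Lemma beta_op y z v : beta (op y z) v = beta z (beta y (binv z v)).
Proof. by rewrite [RHS]beta_hom binvKV. Qed.

Lemma Dis_conj h hi f :
  cancel h hi -> cancel hi h -> quandle_hom op op h ->
  Dis op f -> Dis op (h \o f \o hi).
Proof.
move=> hK hiK hh Df; have hih := quandle_hom_can hK hiK hh.
apply: (Df (fun f => Dis op (h \o f \o hi))).
- move=> y z g zK gK; apply: (@Dis_eq _ _ (beta (h y) \o (h \o g \o hi))).
    by move=> q /=; rewrite [RHS]hh.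
  apply: (@Dis_gen _ _ _ (h z)) => q /=.
    by rewrite [hi _]hih hK zK hiK.
  by rewrite -[beta _ _]hh; apply: etrans (congr1 h (gK _)) (hiK q).
- by apply: Dis_eq Dis_id => q /=; rewrite hiK.
- by move=> f1 f2 D1 D2; apply: Dis_eq (Dis_comp D1 D2) => q /=; rewrite hK.
- by move=> f1 g D1 f1K gK; apply: Dis_inv D1 (can_conj hK hiK f1K) (can_conj hK hiK gK).
- by move=> f1 f2 f12 D1; apply: Dis_eq D1 => q /=; rewrite f12.
Qed.

Hypothesis opM : is_medial op.

Lemma medial_beta_swap x y z u :
  beta y (binv z (beta x u)) = beta x (binv z (beta y u)).
Proof.
have E : beta (op y z) (beta x u) = beta (op x z) (beta y u) := opM u x y z.
by move: E; rewrite !beta_op => /(can_inj (binvK z)).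
Qed.

Lemma beta_binv_commute y z x w q :
  beta y (binv z (beta x (binv w q))) = beta x (binv w (beta y (binv z q))).
Proof.
rewrite medial_beta_swap; congr (beta x _).
have := medial_beta_swap y w z (binv w q); rewrite binvKV => <-.
by rewrite binvK.
Qed.

Lemma Dis_commute f h : Dis op f -> Dis op h -> f \o h =1 h \o f.
Proof.
have gen_commute y z g c q' : cancel (beta z) g -> cancel g (beta z) ->
    Dis op c -> beta y (g (c q')) = c (beta y (g q')).
  move=> zK gK Dc; rewrite !(cancel_inv_eq zK (binvKV z)).
  apply: (@Dis_commute_ind _ _ (beta y \o binv z)) Dc => y' z' g' q'' z'K g'K.
  by rewrite !(cancel_inv_eq z'K (binvKV z')) beta_binv_commute.
move=> Df Dh q /=; apply: Dis_commute_ind Dh => y z g q' zK gK.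
by symmetry; apply: gen_commute zK gK Df.
Qed.

End QuandleFacts.

Lemma MQ_ind mu (D : diagram mu) (Q : Type) (op : Q -> Q -> Q)
    (iota : d_arc D -> Q) :
  is_MQ op iota -> forall S : Q -> Prop, (forall a, S (iota a)) ->
  (forall x y, S x -> S y -> S (op x y)) ->
  (forall x y z, op z y = x -> S x -> S y -> S z) ->
  forall q, S q.
Proof.
move=> [opQ opM rel_iota MQ_univ] S S_iota S_op S_div.
pose opS (a b : {x | S x}) := exist S _ (S_op _ _ (svalP a) (svalP b)).
have opSQ : is_quandle opS.
  have [idem _ selfdistr] := opQ; split.
  - by case=> x Sx; apply: eq_exist; apply: idem.
  - case=> y Sy.
    pose g (u : {x | S x}) :=
      exist S _ (S_div _ _ _ (binvKV opQ y (sval u)) (svalP u) Sy).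
    by exists g => -[u Su]; apply: eq_exist; [apply: binvK | apply: binvKV].
  - by case=> x Sx [y Sy] [z Sz]; apply: eq_exist; apply: selfdistr.
have opSM : is_medial opS by case=> w ? [x ?] [y ?] [z ?]; apply: eq_exist; apply: opM.
have rel_iotaS : rel_MQ opS (fun a => exist S _ (S_iota a)).
  by move=> c; apply: eq_exist; apply: rel_iota.
have [h [h_hom h_iota _]] := MQ_univ _ _ _ opSQ opSM rel_iotaS.
have [h0 [_ _ h0_uniq]] := MQ_univ _ _ _ opQ opM rel_iota.
(* Both the identity and sval \o h fix the arcs, so they agree. *)
have id_h0 : id =1 h0 by apply: h0_uniq.
have val_h0 : sval \o h =1 h0.
  by apply: h0_uniq => [x y | a] /=; rewrite ?h_hom ?h_iota.
by move=> q; rewrite [q]id_h0 -val_h0; apply: svalP.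
Qed.

Record medialQuandle := MedialQuandle {
  mq_sort :> Type;
  mq_op : mq_sort -> mq_sort -> mq_sort;
  mq_quandle : is_quandle mq_op;
  mq_medial : is_medial mq_op }.

Section DisplacementGroup.
Variable X : medialQuandle.
Local Notation op := (@mq_op X).

Record displacement := Displacement {
  dfun :> X -> X;
  dinv : X -> X;
  dfunK : cancel dfun dinv;
  dinvK : cancel dinv dfun;
  dfun_Dis : Dis op dfun }.

Lemma displacement_eq (x y : displacement) : x =1 y -> x = y.
Proof.
case: x y => f g fK gK Df [f' g' f'K g'K Df'] /= /funext ff'; subst f'.
have gg' : g = g' by apply: funext => q; rewrite -{1}(g'K q) fK.
subst g'; congr Displacement; exact: Prop_irrelevance.
Qed.

Definition disp0 := Displacement (fun _ => erefl) (fun _ => erefl) Dis_id.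

Definition disp_add (x y : displacement) :=
  Displacement (can_comp (dfunK x) (dfunK y)) (can_comp (dinvK y) (dinvK x))
    (Dis_comp (dfun_Dis x) (dfun_Dis y)).

Definition disp_opp (x : displacement) :=
  Displacement (dinvK x) (dfunK x) (Dis_inv (dfun_Dis x) (dfunK x) (dinvK x)).

Lemma disp_addA : associative disp_add.
Proof. by move=> x y z; apply: displacement_eq. Qed.

Lemma disp_addC : commutative disp_add.
Proof.
move=> x y; apply: displacement_eq => q.
exact (Dis_commute (@mq_quandle X) (@mq_medial X) (dfun_Dis x) (dfun_Dis y) q).
Qed.

Lemma disp_add0 : left_id disp0 disp_add.
Proof. by move=> x; apply: displacement_eq. Qed.

Lemma disp_addN : left_inverse disp0 disp_opp disp_add.
Proof. by move=> x; apply: displacement_eq => q /=; rewrite dfunK. Qed.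

End DisplacementGroup.

HB.instance Definition _ X := gen_eqMixin (displacement X).
HB.instance Definition _ X := gen_choiceMixin (displacement X).
HB.instance Definition _ X :=
  GRing.isZmodule.Build (displacement X) (@disp_addA X) (@disp_addC X)
    (@disp_add0 X) (@disp_addN X).

Section DisplacementModule.
Variable X : medialQuandle.
Local Notation op := (@mq_op X).
Local Notation beta := (beta op).
Local Notation opQ := (@mq_quandle X).
Local Notation binv := (binv opQ).
Implicit Types (x y : displacement X).

Lemma dfunD x y q : (x + y) q = x (y q). Proof. by []. Qed.
Lemma dfunN x q : (- x) q = dinv x q. Proof. by []. Qed.

Section Conjugation.
Variables (h hi : X -> X) (hK : cancel h hi) (hiK : cancel hi h).
Hypothesis h_hom : quandle_hom op op h.

Definition dconj x :=
  Displacement (can_conj hK hiK (dfunK x)) (can_conj hK hiK (dinvK x))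
    (Dis_conj hK hiK h_hom (dfun_Dis x)).

Lemma dconjD : additive_map dconj.
Proof. by move=> x y; apply: displacement_eq => q /=; rewrite hK. Qed.

End Conjugation.

Lemma dconjK h hi (hK : cancel h hi) (hiK : cancel hi h)
    (h_hom : quandle_hom op op h) (hi_hom : quandle_hom op op hi) :
  cancel (dconj hK hiK h_hom) (dconj hiK hK hi_hom).
Proof. by move=> x; apply: displacement_eq => q /=; rewrite !hK. Qed.

Variable s : X.

Definition tconj := dconj (binvK opQ s) (binvKV opQ s) (beta_hom opQ s).

Lemma tconj_Lmod : is_Lmod tconj.
Proof.
split; first exact: dconjD.
by exists (dconj (binvKV opQ s) (binvK opQ s) (binv_hom opQ s)); apply: dconjK.
Qed.

Lemma tconj_Lmu_mod mu : is_Lmu_mod (fun _ : 'I_mu => tconj).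
Proof. by split=> // _; apply: tconj_Lmod. Qed.

Definition dbeta (y : X) :=
  Displacement (can_comp (binvK opQ y) (binvKV opQ s))
    (can_comp (binvK opQ s) (binvKV opQ y)) (Dis_gen y (binvK opQ s) (binvKV opQ s)).

Lemma dbeta_id : dbeta s = 0.
Proof. by apply: displacement_eq => q /=; rewrite binvKV. Qed.

Lemma dbeta_op (x y : X) :
  dbeta (op x y) = dbeta y + tconj (dbeta x) - tconj (dbeta y).
Proof. by apply: displacement_eq => q /=; rewrite (beta_op opQ) !binvK. Qed.

Lemma rel_MA_dbeta mu (D : diagram mu) (iota : d_arc D -> X) :
  rel_MQ op iota -> rel_MA (fun _ => tconj) (fun a => dbeta (iota a)).
Proof.
by move=> rel_iota c; rewrite -rel_iota dbeta_op; apply/eqP; rewrite subr_eq0 addrAC.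
Qed.

Section Span.
Variables (mu : nat) (D : diagram mu) (iota : d_arc D -> X).
Hypothesis MQ : is_MQ op iota.
Local Notation span := (submod_gen tconj (fun w => exists a, w = dbeta (iota a))).

Lemma dbeta_span q : span (dbeta q).
Proof.
elim/(MQ_ind MQ): q => [a | x y Sx Sy | x y z <- Sx Sy].
- by apply: submod_gen_gen; exists a.
- rewrite dbeta_op.
  exact: submod_genB (submod_genD Sy (submod_gen_t Sx)) (submod_gen_t Sy).
- apply: submod_gen_tV.
  have -> : tconj (dbeta z) = dbeta (op z y) - dbeta y + tconj (dbeta y).
    by rewrite dbeta_op addrAC subrK (addrC (dbeta y)) addrK.
  exact: submod_genD (submod_genB Sx Sy) (submod_gen_t Sy).
Qed.

Lemma Dis_span d : Dis op d -> exists2 w, span w & w =1 d.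
Proof.
move=> Dd; apply: (Dd (fun d => exists2 w, span w & w =1 d)).
- move=> y z g zK gK; exists (dbeta y - dbeta z).
    by apply: submod_genB; apply: dbeta_span.
  by move=> q /=; rewrite binvK (cancel_inv_eq zK (binvKV opQ z)).
- by exists 0; first exact: submod_gen0.
- move=> f1 f2 [w1 S1 E1] [w2 S2 E2]; exists (w1 + w2); first exact: submod_genD.
  by move=> q; rewrite dfunD E2 E1.
- move=> f g [w S E] fK gK; exists (- w); first exact: submod_genN.
  by move=> q; rewrite dfunN -[LHS]fK -E dinvK.
- by move=> f1 f2 f12 [w S E]; exists w => // q; rewrite E f12.
Qed.

End Span.

End DisplacementModule.

Theorem corollary30 (mu : nat) (D : diagram mu)
  (M : zmodType) (ts : 'I_mu -> M -> M) (gamma : d_arc D -> M)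
  (N : zmodType) (t : N -> N) (phi : M -> N)
  (Q : Type) (op : Q -> Q -> Q) (iota : d_arc D -> Q)
  (astar : d_arc D) :
  is_MA ts gamma -> is_base_change ts t phi -> is_MQ op iota ->
  let M0 := submod_gen t (fun x => exists a, x = phi (gamma a - gamma astar)) in
  let bstar := beta op (iota astar) in
  exists e : N -> Q -> Q,
    [/\ (forall x, M0 x -> Dis op (e x)),
        (forall x y, M0 x -> M0 y -> e (x + y) =1 e x \o e y),
        (forall x g, M0 x -> cancel bstar g -> cancel g bstar ->
           e (t x) =1 bstar \o e x \o g),
        (forall d, Dis op d -> exists2 x, M0 x & e x =1 d) &
        (forall a g, cancel bstar g -> cancel g bstar ->
           e (phi (gamma a - gamma astar)) =1 beta op (iota a) \o g)].
Proof.
move=> [_ [_ MA_univ]] [[_ t_bij] _ _ BC_univ] MQ M0 bstar.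
have [opQ opM rel_iota _] := MQ.
pose X := MedialQuandle opQ opM; pose s : X := iota astar.
have [f [f_add f_ts f_gamma _]] :=
  MA_univ _ _ _ (tconj_Lmu_mod s mu) (rel_MA_dbeta s rel_iota).
have [F [F_add F_t F_phi _]] := BC_univ _ _ f (tconj_Lmod s) f_add f_ts.
have F_gen a : F (phi (gamma a - gamma astar)) = dbeta s (iota a).
  by rewrite F_phi (additive_mapB f_add) !f_gamma dbeta_id subr0.
have bstar_inv g : cancel g bstar -> g =1 binv opQ s.
  by move=> gK q; symmetry; apply: cancel_inv_eq (binvK opQ s) gK q.
exists (fun x => dfun (F x)); split.
- by move=> x _; exact (dfun_Dis (F x)).
- by move=> x y _ _ q; rewrite F_add.
- by move=> x g _ _ /bstar_inv gE q; rewrite F_t /= gE.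
- move=> d /(Dis_span s MQ) [w w_span wd].
  have F_onto_gens w' : (exists a, w' = dbeta s (iota a)) ->
      exists2 x, (exists a, x = phi (gamma a - gamma astar)) & F x = w'.
    by move=> [a ->]; exists (phi (gamma a - gamma astar)); [exists a | apply: F_gen].
  have [x M0x Fx] :=
    submod_gen_map t_bij (bij_inj (tconj_Lmod s).2) F_add F_t F_onto_gens w_span.
  by exists x => // q; rewrite Fx wd.
- by move=> a g _ /bstar_inv gE q; rewrite F_gen /= gE.
Qed.
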